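(* Let $\Gamma^B$ be either $\Gamma_1^B$ or $\Gamma_2^B$ (as in the context), with the operator $-\Delta=-d^2/dx^2$. Then the first eigenvalue $\lambda_1$ of $-\Delta$ on $\Gamma^B$ is simple. Moreover, if $\ell_1=\ell_2=\ell_3=\ell_4$, then the eigenfunction $\phi$ corresponding to $\lambda_1$ is identical on the four edges $e_1,\dots,e_4$, i.e. $\phi_1\equiv\phi_2\equiv\phi_3\equiv\phi_4$ where $\phi_j=\phi|_{e_j}$ (each edge parametrized from $B$ to $A$), and it is non-zero everywhere except at $B$.
   Context: $\Gamma_1$: two vertices $A,B$ joined by four edges $e_1,\dots,e_4$ of lengths $\ell_1,\dots,\ell_4>0$, with $\delta$-type condition (real coupling constant $\gamma_A$) at $A$. $\Gamma_2$: $\Gamma_1$ plus a vertex $C$ and edge $e_0$ of length $\ell_0>0$ joining $C$ to $A$, with Neumann–Kirchhoff conditions at $A$ and $C$. A $\delta$-type condition with coupling $\gamma_v$ at $v$: $f$ continuous at $v$ and $\sum_{e\ni v}f_e'(v)=\gamma_vf(v)$ (derivatives into the edges); Neumann–Kirchhoff means $\gamma_v=0$. $\Gamma_i^B$ is obtained from $\Gamma_i$ by imposing the Dirichlet condition $f_e(B)=0$ on every edge end at $B$ (which decouples the edge ends at $B$). *)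

From Stdlib Require Import Reals List.
From Coquelicot Require Import Coquelicot.
Import ListNotations.
Open Scope R_scope.

Inductive graph_kind := Gamma1 | Gamma2.

(* Edge indices: j = 1..4 are e_1..e_4, parametrized x in [0, l j] from B (x=0)
   to A (x=l j); j = 0 is e_0 (only in Gamma2), parametrized from A (x=0)
   to C (x=l 0). *)
Definition edges (G : graph_kind) : list nat :=
  match G with Gamma1 => [1;2;3;4]%nat | Gamma2 => [0;1;2;3;4]%nat end.

(* Coupling constant at A: gamma_A (delta condition) for Gamma1,
   0 (Neumann-Kirchhoff) for Gamma2. *)
Definition coupling (G : graph_kind) (gA : R) : R :=
  match G with Gamma1 => gA | Gamma2 => 0 end.

(* On one edge of length L: f is twice differentiable (as a function on R, the
   values on [0,L] are what matters; derivatives at the endpoints are the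
   one-sided ones of the edge function) and -f'' = lam f on [0,L]. *)
Definition edge_eq (lam L : R) (f : R -> R) : Prop :=
  (forall x, ex_derive f x) /\ (forall x, ex_derive (Derive f) x) /\
  (forall x, 0 <= x <= L -> - Derive (Derive f) x = lam * f x).

Definition is_eigenfunction (G : graph_kind) (l : nat -> R) (gA lam : R)
    (phi : nat -> R -> R) : Prop :=
  (forall j, In j (edges G) -> edge_eq lam (l j) (phi j)) /\
  (forall j, In j [1;2;3;4]%nat -> phi j 0 = 0) /\
  (forall j k, In j [1;2;3;4]%nat -> In k [1;2;3;4]%nat -> phi j (l j) = phi k (l k)) /\
  (match G with
   | Gamma1 =>
       (* delta condition at A, derivatives taken into the edges *)
       - Derive (phi 1%nat) (l 1%nat) - Derive (phi 2%nat) (l 2%nat)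
       - Derive (phi 3%nat) (l 3%nat) - Derive (phi 4%nat) (l 4%nat)
         = coupling G gA * phi 1%nat (l 1%nat)
   | Gamma2 =>
       phi 0%nat 0 = phi 1%nat (l 1%nat) /\
       Derive (phi 0%nat) 0
       - Derive (phi 1%nat) (l 1%nat) - Derive (phi 2%nat) (l 2%nat)
       - Derive (phi 3%nat) (l 3%nat) - Derive (phi 4%nat) (l 4%nat)
         = coupling G gA * phi 1%nat (l 1%nat) /\
       (* Kirchhoff at C (degree one vertex): derivative into e_0 vanishes *)
       - Derive (phi 0%nat) (l 0%nat) = 0
   end) /\
  (exists j x, In j (edges G) /\ 0 <= x <= l j /\ phi j x <> 0).

Definition is_eigenvalue (G : graph_kind) (l : nat -> R) (gA lam : R) : Prop :=
  exists phi, is_eigenfunction G l gA lam phi.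

Definition is_first_eigenvalue (G : graph_kind) (l : nat -> R) (gA lam : R) : Prop :=
  is_eigenvalue G l gA lam /\ (forall mu, is_eigenvalue G l gA mu -> lam <= mu).

Definition is_simple_eigenvalue (G : graph_kind) (l : nat -> R) (gA lam : R) : Prop :=
  forall phi psi, is_eigenfunction G l gA lam phi -> is_eigenfunction G l gA lam psi ->
    exists c : R, forall j x, In j (edges G) -> 0 <= x <= l j -> psi j x = c * phi j x.

(* On a spoke e_j an eigenfunction has vanishing Wronskian with the solution u of
   -u'' = lam u, u(0) = 0, hence is a multiple of u; on e_0 it is likewise a multiple of the
   solution v with v'(l_0) = 0.  While sqrt lam * l_j < PI (and sqrt lam * l_0 < PI/2), u and v
   are positive on these edges, so phi = phi(A) * P for a fixed positive profile P; this gives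
   simplicity, phi_1 = ... = phi_4 for equal lengths, and non-vanishing, since phi(A) <> 0 for a
   nontrivial phi.  That lam_1 is below this threshold follows from exhibiting an eigenvalue
   there: the secular equation gA + sum_j k cot(k l_j) = 0 (Gamma_1), resp.
   sum_j k cot(k l_j) = k tan(k l_0) (Gamma_2), changes sign before its first pole, and when
   gA + sum_j 1/l_j <= 0 on Gamma_1 a non-positive eigenvalue (via k coth, or lam = 0) exists. *)

From Stdlib Require Import Reals Ranalysis5 List Lra FunctionalExtensionality.
From Coquelicot Require Import Coquelicot.
Import ListNotations.
Open Scope R_scope.

(** * The equation -u'' = lam u on an edge *)

Lemma continuity_pt_is_derive (f : R -> R) x d : is_derive f x d -> continuity_pt f x.
Proof.
  intros Hd. apply continuity_pt_filterlim.
  apply (ex_derive_continuous (K := R_AbsRing) (V := R_NormedModule)).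
  now exists d.
Qed.

Lemma eq_is_derive_0 (h : R -> R) a b :
  a <= b -> (forall t, a <= t <= b -> is_derive h t 0) -> h a = h b.
Proof.
  intros Hab Hd.
  destruct (MVT_gen h a b (fun _ => 0)) as [c [_ Hc]].
  - intros x Hx. rewrite Rmin_left, Rmax_right in Hx by lra. apply Hd; lra.
  - intros x Hx. rewrite Rmin_left, Rmax_right in Hx by lra.
    apply (continuity_pt_is_derive _ _ 0), Hd; lra.
  - lra.
Qed.

Lemma root_of_sign_change (f : R -> R) a b :
  a < b -> (forall k, a <= k <= b -> ex_derive f k) -> f a * f b < 0 ->
  exists k, a <= k <= b /\ f k = 0.
Proof.
  intros Hab Hd Hs.
  assert (Hc : forall g : R -> R, (forall k, a <= k <= b -> ex_derive g k) ->
             forall k, a <= k <= b -> continuity_pt g k).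
  { intros g Hg k Hk. destruct (Hg k Hk) as [d Hgd].
    exact (continuity_pt_is_derive g k d Hgd). }
  destruct (Rlt_or_le (f a) 0) as [Ha|Ha].
  - destruct (IVT_interv f a b (Hc f Hd) Hab Ha ltac:(nra)) as [k Hk]. now exists k.
  - assert (Hopp : forall k, a <= k <= b -> ex_derive (fun x => - f x) k).
    { intros k Hk. exact (ex_derive_opp (V := R_NormedModule) f k (Hd k Hk)). }
    assert (Hb : f b < 0) by nra.
    destruct (IVT_interv (fun x => - f x) a b (Hc _ Hopp) Hab ltac:(cbv beta; nra) ltac:(cbv beta; lra))
      as [k [Hk Hfk]].
    exists k. split; [exact Hk | lra].
Qed.

Definition ode_sol (lam : R) (g : R -> R) : Prop :=
  (forall x, ex_derive g x) /\ (forall x, ex_derive (Derive g) x) /\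
  (forall x, Derive (Derive g) x = - lam * g x).

Lemma ode_sol_intro lam (g g' : R -> R) :
  (forall x, is_derive g x (g' x)) -> (forall x, is_derive g' x (- lam * g x)) ->
  ode_sol lam g.
Proof.
  intros Hg Hg'.
  assert (E : Derive g = g').
  { apply functional_extensionality; intros x; apply is_derive_unique, Hg. }
  unfold ode_sol. rewrite E. split; [|split].
  - intros x; now exists (g' x).
  - intros x; now exists (- lam * g x).
  - intros x; now apply is_derive_unique.
Qed.

Lemma ode_sol_scal lam c g : ode_sol lam g -> ode_sol lam (fun x => c * g x).
Proof.
  intros [H1 [H2 H3]].
  assert (E : Derive (fun x => c * g x) = fun x => c * Derive g x).
  { apply functional_extensionality; intros x; apply Derive_scal. }
  unfold ode_sol. rewrite E. split; [|split].
  - intros x; now apply ex_derive_scal.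
  - intros x; now apply ex_derive_scal.
  - intros x. rewrite Derive_scal, H3. ring.
Qed.

Lemma edge_eq_ode_sol lam L g : ode_sol lam g -> edge_eq lam L g.
Proof. intros [H1 [H2 H3]]. split; [|split]; auto. intros x _. rewrite H3. ring. Qed.

Definition wronskian (f g : R -> R) (x : R) : R := f x * Derive g x - Derive f x * g x.

Lemma wronskian_const lam L f g x y :
  edge_eq lam L f -> ode_sol lam g -> 0 <= x <= L -> 0 <= y <= L ->
  wronskian f g x = wronskian f g y.
Proof.
  intros [Hf1 [Hf2 Hf3]] [Hg1 [Hg2 Hg3]].
  assert (K : forall a b, 0 <= a -> a <= b -> b <= L -> wronskian f g a = wronskian f g b).
  { intros a b Ha Hab Hb. apply (eq_is_derive_0 (wronskian f g)); auto.
    intros t Ht.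
    replace 0 with ((Derive f t * Derive g t + f t * Derive (Derive g) t) -
                    (Derive (Derive f) t * g t + Derive f t * Derive g t)).
    - apply (is_derive_minus (V := R_NormedModule));
        apply Derive.is_derive_mult; apply Derive_correct; auto.
    - rewrite Hg3. specialize (Hf3 t ltac:(lra)). nra. }
  intros Hx Hy. destruct (Rle_lt_dec x y).
  - apply K; lra.
  - symmetry; apply K; lra.
Qed.

Lemma ratio_const_of_wronskian_0 (f g : R -> R) a b :
  a <= b -> (forall t, ex_derive f t) -> (forall t, ex_derive g t) ->
  (forall t, a <= t <= b -> 0 < g t) -> (forall t, a <= t <= b -> wronskian f g t = 0) ->
  f a / g a = f b / g b.
Proof.
  intros Hab Hf Hg Hpos HW.
  apply (eq_is_derive_0 (fun t => f t / g t)); auto.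
  intros t Ht. specialize (Hpos t Ht).
  replace 0 with ((Derive f t * g t - f t * Derive g t) / (g t ^ 2)).
  - apply is_derive_div; try apply Derive_correct; auto; lra.
  - specialize (HW t Ht). unfold wronskian in HW.
    replace (Derive f t * g t - f t * Derive g t) with 0 by lra. field. lra.
Qed.

Lemma edge_ratio_const lam L f g p x y :
  edge_eq lam L f -> ode_sol lam g -> 0 <= p <= L -> wronskian f g p = 0 ->
  0 <= x <= y -> y <= L -> (forall t, x <= t <= y -> 0 < g t) ->
  f x / g x = f y / g y.
Proof.
  intros Hf Hg Hp HW Hx Hy Hpos.
  apply ratio_const_of_wronskian_0; auto; try lra.
  - apply Hf.
  - apply Hg.
  - intros t Ht. rewrite (wronskian_const lam L f g t p); auto; lra.
Qed.

Lemma dirichlet_edge_profile lam L f u :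
  edge_eq lam L f -> ode_sol lam u -> f 0 = 0 -> u 0 = 0 ->
  (forall x, 0 < x <= L -> 0 < u x) ->
  forall x, 0 <= x <= L -> f x = f L * (u x / u L).
Proof.
  intros Hf Hu Hf0 Hu0 Hpos x Hx.
  destruct (Req_dec x 0) as [->|Hx0].
  - rewrite Hf0, Hu0. unfold Rdiv. ring.
  - assert (Hux : 0 < u x) by (apply Hpos; lra).
    assert (HuL : 0 < u L) by (apply Hpos; lra).
    assert (E : f x / u x = f L / u L).
    { apply (edge_ratio_const lam L f u 0); auto; try lra.
      - unfold wronskian. rewrite Hf0, Hu0. ring.
      - intros t Ht. apply Hpos. lra. }
    replace (f x) with (f x / u x * u x) by (field; lra).
    rewrite E. field. lra.
Qed.

Lemma neumann_edge_profile lam L f v :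
  edge_eq lam L f -> ode_sol lam v -> Derive f L = 0 -> Derive v L = 0 ->
  (forall x, 0 <= x <= L -> 0 < v x) ->
  forall x, 0 <= x <= L -> f x = f 0 * (v x / v 0).
Proof.
  intros Hf Hv Hf0 Hv0 Hpos x Hx.
  assert (Hvx : 0 < v x) by (apply Hpos; lra).
  assert (Hv0' : 0 < v 0) by (apply Hpos; lra).
  assert (E : f 0 / v 0 = f x / v x).
  { apply (edge_ratio_const lam L f v L); auto; try lra.
    - unfold wronskian. rewrite Hf0, Hv0. ring.
    - intros t Ht. apply Hpos. lra. }
  replace (f x) with (f x / v x * v x) by (field; lra).
  rewrite <- E. field. lra.
Qed.

Lemma Derive_sin_mul k y : Derive (fun x => sin (k * x)) y = k * cos (k * y).
Proof. apply is_derive_unique. auto_derive; auto; ring. Qed.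

Lemma Derive_sinh_mul k y : Derive (fun x => sinh (k * x)) y = k * cosh (k * y).
Proof. apply is_derive_unique. unfold sinh, cosh. auto_derive; auto. unfold Rdiv. ring. Qed.

Lemma Derive_cos_shift k a y :
  Derive (fun x => cos (k * (a - x))) y = k * sin (k * (a - y)).
Proof. apply is_derive_unique. auto_derive; auto. unfold Rminus. ring. Qed.

Lemma Derive_cosh_shift k a y :
  Derive (fun x => cosh (k * (a - x))) y = - k * sinh (k * (a - y)).
Proof. apply is_derive_unique. unfold sinh, cosh. auto_derive; auto. unfold Rminus, Rdiv. ring. Qed.

Lemma ode_sol_sin k : ode_sol (k ^ 2) (fun x => sin (k * x)).
Proof.
  apply (ode_sol_intro _ _ (fun x => k * cos (k * x))); intros x; auto_derive; auto; ring.
Qed.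

Lemma ode_sol_sinh k : ode_sol (- k ^ 2) (fun x => sinh (k * x)).
Proof.
  apply (ode_sol_intro _ _ (fun x => k * cosh (k * x))); intros x;
    unfold sinh, cosh; auto_derive; auto; unfold Rdiv; ring.
Qed.

Lemma ode_sol_id : ode_sol 0 (fun x => x).
Proof. apply (ode_sol_intro _ _ (fun _ => 1)); intros x; auto_derive; auto; ring. Qed.

Lemma ode_sol_cos_shift k a : ode_sol (k ^ 2) (fun x => cos (k * (a - x))).
Proof.
  apply (ode_sol_intro _ _ (fun x => k * sin (k * (a - x)))); intros x;
    auto_derive; auto; unfold Rminus; ring.
Qed.

Lemma ode_sol_cosh_shift k a : ode_sol (- k ^ 2) (fun x => cosh (k * (a - x))).
Proof.
  apply (ode_sol_intro _ _ (fun x => - k * sinh (k * (a - x)))); intros x;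
    unfold sinh, cosh; auto_derive; auto; unfold Rminus, Rdiv; ring.
Qed.

Lemma ode_sol_const c : ode_sol 0 (fun _ => c).
Proof. apply (ode_sol_intro _ _ (fun _ => 0)); intros x; auto_derive; auto; ring. Qed.

Lemma sinh_pos x : 0 < x -> 0 < sinh x.
Proof. intros Hx. rewrite <- sinh_0. now apply sinh_lt. Qed.

Lemma cosh_pos x : 0 < cosh x.
Proof. unfold cosh. generalize (exp_pos x) (exp_pos (- x)). lra. Qed.

Lemma exists_sqrt_pos lam : 0 < lam -> exists k, 0 < k /\ sqrt lam = k /\ lam = k ^ 2.
Proof.
  intros H. exists (sqrt lam). split; [|split].
  - now apply sqrt_lt_R0.
  - reflexivity.
  - rewrite <- Rsqr_pow2, Rsqr_sqrt; lra.
Qed.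

Lemma dirichlet_sol_pos lam :
  exists u, ode_sol lam u /\ u 0 = 0 /\
    forall x, 0 < x -> (lam <= 0 \/ sqrt lam * x < PI) -> 0 < u x.
Proof.
  destruct (Rtotal_order lam 0) as [Hn|[->|Hp]].
  - destruct (exists_sqrt_pos (- lam) ltac:(lra)) as [k [Hk [_ Hl]]].
    exists (fun x => sinh (k * x)). split; [|split].
    + replace lam with (- k ^ 2) by lra. apply ode_sol_sinh.
    + now rewrite Rmult_0_r, sinh_0.
    + intros x Hx _. apply sinh_pos, Rmult_lt_0_compat; lra.
  - exists (fun x => x). split; [apply ode_sol_id | split; [reflexivity | intros; lra]].
  - destruct (exists_sqrt_pos lam Hp) as [k [Hk [Hs Hl]]].
    exists (fun x => sin (k * x)). split; [|split].
    + rewrite Hl. apply ode_sol_sin.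
    + now rewrite Rmult_0_r, sin_0.
    + intros x Hx [H|H]; [lra|]. rewrite Hs in H.
      apply sin_gt_0; [apply Rmult_lt_0_compat|]; lra.
Qed.

Lemma neumann_sol_pos lam L :
  0 < L -> (lam <= 0 \/ sqrt lam * L < PI / 2) ->
  exists v, ode_sol lam v /\ Derive v L = 0 /\ forall x, 0 <= x <= L -> 0 < v x.
Proof.
  intros HL Hlam.
  destruct (Rtotal_order lam 0) as [Hn|[->|Hp]].
  - destruct (exists_sqrt_pos (- lam) ltac:(lra)) as [k [Hk [_ Hl]]].
    exists (fun x => cosh (k * (L - x))). split; [|split].
    + replace lam with (- k ^ 2) by lra. apply ode_sol_cosh_shift.
    + now rewrite Derive_cosh_shift, Rminus_diag, Rmult_0_r, sinh_0, Rmult_0_r.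
    + intros x _. apply cosh_pos.
  - exists (fun _ => 1).
    split; [apply ode_sol_const | split; [apply Derive_const | intros; lra]].
  - destruct Hlam as [H|H]; [lra|].
    destruct (exists_sqrt_pos lam Hp) as [k [Hk [Hs Hl]]]. rewrite Hs in H.
    exists (fun x => cos (k * (L - x))). split; [|split].
    + rewrite Hl. apply ode_sol_cos_shift.
    + now rewrite Derive_cos_shift, Rminus_diag, Rmult_0_r, sin_0, Rmult_0_r.
    + intros x Hx. apply cos_gt_0; nra.
Qed.

(** * Trigonometric estimates *)

Lemma PI_gt_3 : 3 < PI.
Proof. generalize PI2_3_2. lra. Qed.

Lemma cos_ge_quadratic y : 0 <= y <= PI / 2 -> 1 - y ^ 2 / 2 <= cos y.
Proof.
  intros H. destruct (cos_bound y 0 ltac:(lra) ltac:(lra)) as [Hc _].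
  unfold cos_approx, cos_term in Hc; simpl in Hc. lra.
Qed.

Lemma mul_cos_le_sin y : 0 < y < PI -> y * cos y <= sin y.
Proof.
  intros Hy. assert (Hs := sin_gt_0 y ltac:(lra) ltac:(lra)).
  destruct (Rle_lt_dec (PI / 2) y).
  - assert (cos y <= 0) by (apply cos_le_0; lra). nra.
  - destruct (cos_bound y 0 ltac:(lra) ltac:(lra)) as [_ Hc].
    destruct (sin_bound y 0 ltac:(lra) ltac:(lra)) as [Hs' _].
    unfold cos_approx, cos_term, sin_approx, sin_term in Hc, Hs'; simpl in Hc, Hs'.
    assert (y ^ 2 <= 8) by (generalize PI_4; nra).
    assert (y * cos y <= y * (1 - y ^ 2 / 2 + y ^ 4 / 24)) by nra.
    nra.
Qed.

Lemma cot_ge_inv d : 0 < d <= 1 -> / (2 * d) <= cos d / sin d.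
Proof.
  intros Hd. assert (PI2_1 := PI2_1).
  assert (Hs := sin_lt_x d ltac:(lra)). assert (Hs0 := sin_gt_0 d ltac:(lra) ltac:(lra)).
  assert (Hc := cos_ge_quadratic d ltac:(lra)).
  apply Rmult_le_reg_r with (2 * d * sin d); [nra|].
  field_simplify; [nra | lra | lra].
Qed.

Lemma cot_unbounded A : exists d, 0 < d <= / 2 /\ A <= cos d / sin d.
Proof.
  set (B := Rabs A + 1).
  assert (HB : 1 <= B) by (generalize (Rabs_pos A); unfold B; lra).
  assert (HA : A <= B) by (generalize (Rle_abs A); unfold B; lra).
  exists (/ (2 * B)).
  assert (Hd : 0 < / (2 * B) <= / 2).
  { split; [apply Rinv_0_lt_compat; lra | apply Rinv_le_contravar; lra]. }
  split; [exact Hd|].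
  assert (Hc := cot_ge_inv (/ (2 * B)) ltac:(lra)).
  replace (/ (2 * / (2 * B))) with B in Hc by (field; lra).
  lra.
Qed.

(* For u x = sin (k x) and u x = sinh (k x) these are u'(l) / u(l); for u x = cos (k (l - x))
   one has u'(0) / u(0) = ktan k l. *)
Definition kcot (k l : R) : R := k * cos (k * l) / sin (k * l).
Definition ktan (k l : R) : R := k * sin (k * l) / cos (k * l).
Definition kcoth (k l : R) : R := k * cosh (k * l) / sinh (k * l).

Lemma kcot_le k l : 0 < k -> 0 < l -> k * l < PI -> kcot k l <= / l.
Proof.
  intros Hk Hl H. unfold kcot.
  assert (Hkl : 0 < k * l) by (apply Rmult_lt_0_compat; lra).
  assert (Hs := sin_gt_0 (k * l) Hkl H).
  assert (Hc := mul_cos_le_sin (k * l) ltac:(lra)).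
  apply Rmult_le_reg_r with (sin (k * l) * l); [nra|].
  field_simplify; lra.
Qed.

Lemma kcot_ge k l : 0 < k -> 0 < l -> k * l <= 1 -> / l - k ^ 2 / 2 * l <= kcot k l.
Proof.
  intros Hk Hl H. unfold kcot. assert (PI2_1 := PI2_1).
  assert (Hkl : 0 < k * l) by (apply Rmult_lt_0_compat; lra).
  assert (Hs := sin_gt_0 (k * l) Hkl ltac:(lra)).
  assert (Hsx := sin_lt_x (k * l) Hkl).
  assert (Hc := cos_ge_quadratic (k * l) ltac:(lra)).
  apply Rmult_le_reg_r with (sin (k * l) * l); [nra|].
  replace ((/ l - k ^ 2 / 2 * l) * (sin (k * l) * l)) with
    (sin (k * l) * (1 - (k * l) ^ 2 / 2)) by (field; lra).
  replace (k * cos (k * l) / sin (k * l) * (sin (k * l) * l)) with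
    (k * l * cos (k * l)) by (field; lra).
  assert (0 < 1 - (k * l) ^ 2 / 2) by nra.
  apply Rle_trans with (k * l * (1 - (k * l) ^ 2 / 2)); apply Rmult_le_compat; lra.
Qed.

Lemma ktan_le k l : 0 < k -> 0 < l -> k * l <= 1 -> ktan k l <= 2 * k ^ 2 * l.
Proof.
  intros Hk Hl H. unfold ktan. assert (PI2_1 := PI2_1).
  assert (Hkl : 0 < k * l) by (apply Rmult_lt_0_compat; lra).
  assert (Hsx := sin_lt_x (k * l) Hkl).
  assert (Hc := cos_ge_quadratic (k * l) ltac:(lra)).
  assert (Hc2 : / 2 <= cos (k * l)) by nra.
  apply Rmult_le_reg_r with (cos (k * l)); [lra|].
  replace (k * sin (k * l) / cos (k * l) * cos (k * l)) with (k * sin (k * l)) by (field; lra).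
  nra.
Qed.

Lemma ktan_ge_0 k l : 0 < k -> 0 < l -> k * l < PI / 2 -> 0 <= ktan k l.
Proof.
  intros Hk Hl H. unfold ktan.
  assert (Hkl : 0 < k * l) by (apply Rmult_lt_0_compat; lra).
  assert (0 < sin (k * l)) by (apply sin_gt_0; generalize PI2_Rlt_PI; lra).
  assert (0 < cos (k * l)) by (apply cos_gt_0; lra).
  apply Rlt_le, Rdiv_lt_0_compat; [apply Rmult_lt_0_compat|]; lra.
Qed.

Lemma kcoth_bounds k l : 0 < k -> 0 < l -> k <= kcoth k l <= k + / l.
Proof.
  intros Hk Hl. unfold kcoth, cosh, sinh.
  set (y := k * l). assert (Hy : 0 < y) by (apply Rmult_lt_0_compat; lra).
  rewrite exp_Ropp. set (E := exp y).
  assert (HE : 1 < E) by (unfold E; rewrite <- exp_0; apply exp_increasing; lra).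
  assert (HE2 : 1 + 2 * y < E * E).
  { unfold E. rewrite <- exp_plus. replace (y + y) with (2 * y) by ring. apply exp_ineq1. lra. }
  replace (k * ((E + / E) / 2) / ((E - / E) / 2)) with (k * (E * E + 1) / (E * E - 1))
    by (field; nra).
  split.
  - apply Rmult_le_reg_r with (E * E - 1); [nra|]. field_simplify; nra.
  - apply Rmult_le_reg_r with ((E * E - 1) * l); [nra|].
    replace (k * (E * E + 1) / (E * E - 1) * ((E * E - 1) * l)) with (y * (E * E + 1))
      by (unfold y; field; nra).
    replace ((k + / l) * ((E * E - 1) * l)) with ((y + 1) * (E * E - 1))
      by (unfold y; field; nra).
    nra.
Qed.

Lemma mul_cot_ge_abs k L M d :
  0 < k -> 1 < k * L -> L * Rabs M <= cos d / sin d -> Rabs M <= k * (cos d / sin d).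
Proof.
  intros Hk HkL Hcot. assert (HM := Rabs_pos M).
  apply Rle_trans with (k * (L * Rabs M)); [|apply Rmult_le_compat_l; lra].
  rewrite <- Rmult_assoc. nra.
Qed.

Lemma kcot_unbounded L M : 0 < L -> exists k, 0 < k /\ 1 < k * L < PI /\ kcot k L <= M.
Proof.
  intros HL. assert (HP := PI_gt_3).
  destruct (cot_unbounded (L * Rabs M)) as [d [Hd Hcot]].
  assert (Hs := sin_gt_0 d ltac:(lra) ltac:(lra)).
  set (k := (PI - d) / L).
  assert (HkL : k * L = PI - d) by (unfold k; field; lra).
  assert (Hk : 0 < k) by (apply Rdiv_lt_0_compat; lra).
  exists k. split; [exact Hk | split; [lra|]].
  unfold kcot. rewrite HkL, Rtrigo_facts.cos_pi_minus, sin_PI_x.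
  replace (k * - cos d / sin d) with (- (k * (cos d / sin d))) by (field; lra).
  generalize (mul_cot_ge_abs k L M d Hk ltac:(lra) Hcot) (Rle_abs (- M)).
  rewrite Rabs_Ropp. lra.
Qed.

Lemma ktan_unbounded L M : 0 < L -> exists k, 0 < k /\ 1 < k * L < PI / 2 /\ M <= ktan k L.
Proof.
  intros HL. assert (HP := PI_gt_3).
  destruct (cot_unbounded (L * Rabs M)) as [d [Hd Hcot]].
  assert (Hs := sin_gt_0 d ltac:(lra) ltac:(lra)).
  set (k := (PI / 2 - d) / L).
  assert (HkL : k * L = PI / 2 - d) by (unfold k; field; lra).
  assert (Hk : 0 < k) by (apply Rdiv_lt_0_compat; lra).
  exists k. split; [exact Hk | split; [lra|]].
  unfold ktan. rewrite HkL, sin_shift, cos_shift.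
  replace (k * cos d / sin d) with (k * (cos d / sin d)) by (field; lra).
  generalize (mul_cot_ge_abs k L M d Hk ltac:(lra) Hcot) (Rle_abs M). lra.
Qed.

(** * Roots of the secular equations *)

Lemma In_1234_ind (P : nat -> Prop) :
  P 1%nat -> P 2%nat -> P 3%nat -> P 4%nat -> forall j, In j [1;2;3;4]%nat -> P j.
Proof. intros H1 H2 H3 H4 j Hj. simpl in Hj. intuition subst; auto. Qed.

Definition sum4 (f : nat -> R) : R := f 1%nat + f 2%nat + f 3%nat + f 4%nat.

Lemma sum4_sub_scal (f g : nat -> R) c : sum4 (fun j => f j - c * g j) = sum4 f - c * sum4 g.
Proof. unfold sum4. ring. Qed.

Lemma sum4_le (f g : nat -> R) :
  (forall j, In j [1;2;3;4]%nat -> f j <= g j) -> sum4 f <= sum4 g.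
Proof.
  intros H. unfold sum4.
  assert (H1 := H 1%nat ltac:(simpl; tauto)). assert (H2 := H 2%nat ltac:(simpl; tauto)).
  assert (H3 := H 3%nat ltac:(simpl; tauto)). assert (H4 := H 4%nat ltac:(simpl; tauto)).
  lra.
Qed.

Lemma sum4_pos (f : nat -> R) : (forall j, In j [1;2;3;4]%nat -> 0 < f j) -> 0 < sum4 f.
Proof.
  intros H. unfold sum4.
  assert (H1 := H 1%nat ltac:(simpl; tauto)). assert (H2 := H 2%nat ltac:(simpl; tauto)).
  assert (H3 := H 3%nat ltac:(simpl; tauto)). assert (H4 := H 4%nat ltac:(simpl; tauto)).
  lra.
Qed.

Lemma sum4_le_add (f g : nat -> R) m c :
  (forall j, In j [1;2;3;4]%nat -> f j <= g j) -> (forall j, In j [1;2;3;4]%nat -> 0 <= g j) ->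
  In m [1;2;3;4]%nat -> f m <= c -> sum4 f <= sum4 g + c.
Proof.
  intros Hfg Hg Hm Hc.
  assert (Hf : forall j, In j [1;2;3;4]%nat -> f j <= g j + (if Nat.eqb j m then c else 0)).
  { intros j Hj. destruct (Nat.eqb_spec j m) as [->|_]; [|specialize (Hfg j Hj); lra].
    specialize (Hg m Hm). lra. }
  apply sum4_le in Hf. unfold sum4 in *. simpl in Hm.
  intuition subst; simpl in Hf; lra.
Qed.

Lemma exists_longest_spoke (l : nat -> R) :
  exists m, In m [1;2;3;4]%nat /\ forall j, In j [1;2;3;4]%nat -> l j <= l m.
Proof.
  set (L := Rmax (Rmax (l 1%nat) (l 2%nat)) (Rmax (l 3%nat) (l 4%nat))).
  assert (Hle : forall j, In j [1;2;3;4]%nat -> l j <= L).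
  { apply In_1234_ind; unfold L, Rmax; repeat destruct Rle_dec; lra. }
  assert (HL : L = l 1%nat \/ L = l 2%nat \/ L = l 3%nat \/ L = l 4%nat).
  { unfold L, Rmax; repeat destruct Rle_dec; tauto. }
  destruct HL as [E|[E|[E|E]]]; rewrite E in Hle; eexists; (split; [|exact Hle]); simpl; tauto.
Qed.

Lemma exists_small_sq F C a :
  0 < F -> 0 <= C -> 0 < a -> exists e, 0 < e /\ e * a <= 1 /\ e ^ 2 * C < F.
Proof.
  intros HF HC Ha.
  set (e := Rmin (/ (a + 1)) (F / (C + 1))).
  assert (He1 : e <= / (a + 1)) by apply Rmin_l.
  assert (He2 : e <= F / (C + 1)) by apply Rmin_r.
  assert (He0 : 0 < e).
  { apply Rmin_glb_lt; [apply Rinv_0_lt_compat | apply Rdiv_lt_0_compat]; lra. }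
  assert (Hea : e * (a + 1) <= 1).
  { apply Rle_trans with (/ (a + 1) * (a + 1)); [apply Rmult_le_compat_r; lra|].
    right. field. lra. }
  assert (HeC : e * (C + 1) <= F).
  { apply Rle_trans with (F / (C + 1) * (C + 1)); [apply Rmult_le_compat_r; lra|].
    right. field. lra. }
  exists e. split; [exact He0 | split; [nra|]].
  assert (e ^ 2 * C <= e * C) by (apply Rmult_le_compat_r; nra).
  nra.
Qed.

Section LongestSpoke.

Variable l : nat -> R.
Hypothesis Hl : forall j, In j [1;2;3;4]%nat -> 0 < l j.
Variable m : nat.
Hypothesis Hm : In m [1;2;3;4]%nat.
Hypothesis Hlm : forall j, In j [1;2;3;4]%nat -> l j <= l m.

Lemma spokes_below_pi k : 0 <= k -> k * l m < PI -> forall j, In j [1;2;3;4]%nat -> k * l j < PI.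
Proof.
  intros Hk HkL j Hj.
  apply Rle_lt_trans with (k * l m); [apply Rmult_le_compat_l; auto |]; auto.
Qed.

Lemma sin_spoke_pos k j : 0 < k -> k * l m < PI -> In j [1;2;3;4]%nat -> 0 < sin (k * l j).
Proof.
  intros Hk HkL Hj. apply sin_gt_0; [apply Rmult_lt_0_compat; auto|].
  apply spokes_below_pi; auto; lra.
Qed.

Lemma sum4_kcot_ge k :
  0 < k -> k * l m <= 1 -> sum4 (fun j => / l j) - k ^ 2 / 2 * sum4 l <= sum4 (fun j => kcot k (l j)).
Proof.
  intros Hk HkL. rewrite <- sum4_sub_scal. apply sum4_le.
  intros j Hj. apply kcot_ge; auto.
  apply Rle_trans with (k * l m); [apply Rmult_le_compat_l; auto; lra | exact HkL].
Qed.

Lemma sum4_kcot_le k c :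
  0 < k -> k * l m < PI -> kcot k (l m) <= c -> sum4 (fun j => kcot k (l j)) <= sum4 (fun j => / l j) + c.
Proof.
  intros Hk HkL Hc. apply sum4_le_add with m; auto.
  - intros j Hj. apply kcot_le; auto. apply spokes_below_pi; auto; lra.
  - intros j Hj. now apply Rlt_le, Rinv_0_lt_compat, Hl.
Qed.

Lemma gamma2_secular_neg_near_pole l0 :
  0 < l0 -> exists k, 0 < k /\ 1 < k * (l m + l0) /\ k * l m < PI /\ k * l0 < PI / 2 /\
    sum4 (fun j => kcot k (l j)) - ktan k l0 < 0.
Proof.
  intros H0. assert (HL : 0 < l m) by now apply Hl.
  (* The first pole is that of ktan on e_0 or that of kcot on the longest spoke. *)
  destruct (Rle_lt_dec (l m) (2 * l0)).
  - destruct (ktan_unbounded l0 (sum4 (fun j => / l j) + 1) H0) as [k [Hk [[Hk1 Hk0] Htan]]].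
    assert (HkL : k * l m < PI) by nra.
    exists k. do 4 (split; [nra|]).
    assert (sum4 (fun j => kcot k (l j)) <= sum4 (fun j => / l j)).
    { apply sum4_le. intros j Hj. apply kcot_le; auto. apply spokes_below_pi; auto; lra. }
    lra.
  - destruct (kcot_unbounded (l m) (- (sum4 (fun j => / l j) + 1)) HL) as [k [Hk [[Hk1 HkL] Hcot]]].
    assert (Hk0 : k * l0 < PI / 2) by nra.
    exists k. do 4 (split; [nra|]).
    generalize (sum4_kcot_le k _ Hk HkL Hcot) (ktan_ge_0 k l0 Hk H0 Hk0). lra.
Qed.

End LongestSpoke.

Lemma gamma1_secular_root_pos (l : nat -> R) gA :
  (forall j, In j [1;2;3;4]%nat -> 0 < l j) -> 0 < gA + sum4 (fun j => / l j) ->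
  exists k, 0 < k /\ (forall j, In j [1;2;3;4]%nat -> k * l j < PI) /\
    gA + sum4 (fun j => kcot k (l j)) = 0.
Proof.
  intros Hl HF. set (sec := fun k => gA + sum4 (fun j => kcot k (l j))).
  destruct (exists_longest_spoke l) as [m [Hm Hlm]].
  assert (HL : 0 < l m) by now apply Hl.
  destruct (exists_small_sq _ (sum4 l / 2) (l m) HF) as [ka [Hka [HkaL Hka2]]]; [|exact HL|].
  { apply Rlt_le, Rdiv_lt_0_compat; [now apply sum4_pos | lra]. }
  destruct (kcot_unbounded (l m) (- (Rabs gA + sum4 (fun j => / l j) + 1)) HL)
    as [kb [Hkb [[HkbL1 HkbL] Hcot]]].
  assert (Hab : ka < kb) by (apply Rmult_lt_reg_r with (l m); lra).
  assert (Hrange : forall k, ka <= k <= kb -> 0 < k /\ k * l m < PI).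
  { intros k Hk. split; [lra|]. apply Rle_lt_trans with (kb * l m); [apply Rmult_le_compat_r|]; lra. }
  destruct (root_of_sign_change sec ka kb) as [k [Hk Hroot]]; [exact Hab | | |].
  - intros k Hk. destruct (Hrange k Hk) as [Hk0 HkL].
    unfold sec, sum4, kcot. auto_derive.
    repeat split; apply Rgt_not_eq, (sin_spoke_pos l Hl m Hlm); simpl; auto.
  - assert (0 < sec ka).
    { generalize (sum4_kcot_ge l Hl m Hlm ka Hka HkaL). unfold sec. nra. }
    assert (sec kb < 0).
    { generalize (sum4_kcot_le l Hl m Hm Hlm kb _ Hkb HkbL Hcot) (Rle_abs gA).
      unfold sec. lra. }
    nra.
  - destruct (Hrange k Hk) as [Hk0 HkL].
    exists k. split; [exact Hk0 | split; [|exact Hroot]].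
    apply spokes_below_pi with m; auto; lra.
Qed.

Lemma gamma1_secular_root_neg (l : nat -> R) gA :
  (forall j, In j [1;2;3;4]%nat -> 0 < l j) -> gA + sum4 (fun j => / l j) < 0 ->
  exists k, 0 < k /\ gA + sum4 (fun j => kcoth k (l j)) = 0.
Proof.
  intros Hl HF. set (sec := fun k => gA + sum4 (fun j => kcoth k (l j))).
  set (ka := - (gA + sum4 (fun j => / l j)) / 8).
  assert (Hka : 0 < ka) by (unfold ka; lra).
  set (kb := ka + Rabs gA + 1).
  assert (HA := Rle_abs (- gA)). rewrite Rabs_Ropp in HA. assert (HA0 := Rabs_pos gA).
  destruct (root_of_sign_change sec ka kb) as [k [Hk Hroot]].
  - unfold kb. lra.
  - intros k Hk. unfold sec, sum4, kcoth, sinh, cosh. auto_derive.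
    repeat split; apply Rgt_not_eq, sinh_pos, Rmult_lt_0_compat; try lra; apply Hl; simpl; auto.
  - assert (sec ka < 0).
    { enough (sum4 (fun j => kcoth ka (l j)) <= sum4 (fun j => ka + / l j))
        by (unfold sec, ka, sum4 in *; lra).
      apply sum4_le. intros j Hj. apply kcoth_bounds; auto. }
    assert (0 < sec kb).
    { enough (sum4 (fun _ => kb) <= sum4 (fun j => kcoth kb (l j)))
        by (unfold sec, kb, sum4 in *; lra).
      apply sum4_le. intros j Hj. apply kcoth_bounds; [unfold kb; lra | auto]. }
    nra.
  - exists k. split; [lra | exact Hroot].
Qed.

Lemma gamma2_secular_root (l : nat -> R) :
  0 < l 0%nat -> (forall j, In j [1;2;3;4]%nat -> 0 < l j) ->
  exists k, 0 < k /\ (forall j, In j [1;2;3;4]%nat -> k * l j < PI) /\ k * l 0%nat < PI / 2 /\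
    sum4 (fun j => kcot k (l j)) - ktan k (l 0%nat) = 0.
Proof.
  intros H0 Hl. set (l0 := l 0%nat) in *.
  set (sec := fun k => sum4 (fun j => kcot k (l j)) - ktan k l0).
  destruct (exists_longest_spoke l) as [m [Hm Hlm]].
  assert (HL : 0 < l m) by now apply Hl.
  assert (HF : 0 < sum4 (fun j => / l j))
    by (apply sum4_pos; intros j Hj; now apply Rinv_0_lt_compat, Hl).
  assert (HsumL : 0 < sum4 l) by now apply sum4_pos.
  destruct (exists_small_sq _ (sum4 l / 2 + 2 * l0) (l m + l0) HF) as [ka [Hka [Hka1 Hka2]]];
    [lra | lra |].
  assert (HkaL : ka * l m <= 1) by nra.
  assert (Hka0 : ka * l0 <= 1) by nra.
  destruct (gamma2_secular_neg_near_pole l Hl m Hm Hlm l0 H0)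
    as [kb [Hkb [Hkb1 [HkbL [Hkb0 Hneg]]]]].
  assert (Hab : ka < kb) by (apply Rmult_lt_reg_r with (l m + l0); lra).
  assert (Hrange : forall k, ka <= k <= kb -> 0 < k /\ k * l m < PI /\ k * l0 < PI / 2).
  { intros k Hk. split; [lra|].
    split; (eapply Rle_lt_trans; [apply Rmult_le_compat_r; [lra | apply Hk] | assumption]). }
  destruct (root_of_sign_change sec ka kb) as [k [Hk Hroot]]; [exact Hab | | |].
  - intros k Hk. destruct (Hrange k Hk) as [Hk0 [HkL Hk0']].
    unfold sec, sum4, kcot, ktan. auto_derive.
    assert (Hc : 0 < cos (k * l0)) by (apply cos_gt_0; nra).
    repeat split; try (apply Rgt_not_eq; exact Hc);
      apply Rgt_not_eq, (sin_spoke_pos l Hl m Hlm); simpl; auto.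
  - assert (0 < sec ka).
    { generalize (sum4_kcot_ge l Hl m Hlm ka Hka HkaL) (ktan_le ka l0 Hka H0 Hka0).
      unfold sec. nra. }
    unfold sec at 2. nra.
  - destruct (Hrange k Hk) as [Hk0 [HkL Hk0']].
    exists k. split; [exact Hk0 | split; [|split; [exact Hk0' | exact Hroot]]].
    apply spokes_below_pi with m; auto; lra.
Qed.

(** * Eigenfunctions below the threshold *)

Lemma edges_spoke G j : In j [1;2;3;4]%nat -> In j (edges G).
Proof. destruct G; simpl; tauto. Qed.

Lemma edges_cases G j :
  In j (edges G) -> In j [1;2;3;4]%nat \/ (G = Gamma2 /\ j = 0%nat).
Proof. destruct G; simpl; intuition. Qed.

Lemma gamma1_eigenvalue_of_sol (l : nat -> R) gA lam u :
  (forall j, In j [1;2;3;4]%nat -> 0 < l j) ->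
  ode_sol lam u -> u 0 = 0 -> (forall j, In j [1;2;3;4]%nat -> u (l j) <> 0) ->
  gA + sum4 (fun j => Derive u (l j) / u (l j)) = 0 ->
  is_eigenvalue Gamma1 l gA lam.
Proof.
  intros Hl Hu Hu0 Hnz Hsec.
  assert (Hone : forall j, In j [1;2;3;4]%nat -> / u (l j) * u (l j) = 1)
    by (intros j Hj; field; auto).
  exists (fun j x => / u (l j) * u x). split; [|split; [|split; [|split]]].
  - intros j _. now apply edge_eq_ode_sol, ode_sol_scal.
  - intros j _. rewrite Hu0. ring.
  - intros j k Hj Hk. now rewrite !Hone.
  - simpl. rewrite !Derive_scal, Hone by (simpl; tauto).
    unfold sum4 in Hsec. unfold Rdiv in Hsec. lra.
  - exists 1%nat, (l 1%nat). split; [simpl; tauto|].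
    split; [generalize (Hl 1%nat ltac:(simpl; tauto)); lra|].
    rewrite Hone by (simpl; tauto). lra.
Qed.

Lemma gamma2_eigenvalue_of_sol (l : nat -> R) gA lam u v :
  (forall j, In j [1;2;3;4]%nat -> 0 < l j) ->
  ode_sol lam u -> u 0 = 0 -> (forall j, In j [1;2;3;4]%nat -> u (l j) <> 0) ->
  ode_sol lam v -> Derive v (l 0%nat) = 0 -> v 0 <> 0 ->
  sum4 (fun j => Derive u (l j) / u (l j)) - Derive v 0 / v 0 = 0 ->
  is_eigenvalue Gamma2 l gA lam.
Proof.
  intros Hl Hu Hu0 Hnz Hv Hvl Hv0 Hsec.
  assert (Hone : forall j, In j [1;2;3;4]%nat -> / u (l j) * u (l j) = 1)
    by (intros j Hj; field; auto).
  exists (fun j x => match j with O => / v 0 * v x | _ => / u (l j) * u x end).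
  split; [|split; [|split; [|split]]].
  - intros j _. destruct j; now apply edge_eq_ode_sol, ode_sol_scal.
  - intros j Hj. destruct j; [simpl in Hj; intuition discriminate|]. rewrite Hu0. ring.
  - intros j k Hj Hk.
    destruct j; [simpl in Hj; intuition discriminate|].
    destruct k; [simpl in Hk; intuition discriminate|].
    now rewrite !Hone.
  - simpl. rewrite !Derive_scal, Hone by (simpl; tauto).
    split; [field; exact Hv0|]. split.
    + unfold sum4, Rdiv in Hsec. lra.
    + rewrite Hvl. ring.
  - exists 1%nat, (l 1%nat). split; [simpl; tauto|].
    split; [generalize (Hl 1%nat ltac:(simpl; tauto)); lra|].
    rewrite Hone by (simpl; tauto). lra.
Qed.

(* The range of lam on which the Dirichlet solution sin (sqrt lam * x) stays positive on the
   spokes and the Neumann solution cos (sqrt lam * (l_0 - x)) on e_0. *)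
Definition below_threshold (G : graph_kind) (l : nat -> R) (lam : R) : Prop :=
  lam <= 0 \/
  (forall j, In j [1;2;3;4]%nat -> sqrt lam * l j < PI) /\
  (G = Gamma2 -> sqrt lam * l 0%nat < PI / 2).

Lemma below_threshold_le G l lam lam' :
  (forall j, In j (edges G) -> 0 < l j) -> lam <= lam' ->
  below_threshold G l lam' -> below_threshold G l lam.
Proof.
  intros Hl Hle [H|[Hs H0]]; [left; lra|].
  destruct (Rle_lt_dec lam 0) as [h|h]; [left; exact h|right].
  assert (Hsq := sqrt_le_1_alt _ _ Hle).
  split.
  - intros j Hj. assert (0 < l j) by now apply Hl, edges_spoke.
    specialize (Hs j Hj). nra.
  - intros HG. subst G. assert (0 < l 0%nat) by (apply Hl; simpl; tauto).
    specialize (H0 eq_refl). nra.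
Qed.

Lemma gamma1_eigenvalue_below_threshold (l : nat -> R) gA :
  (forall j, In j [1;2;3;4]%nat -> 0 < l j) ->
  exists lam, is_eigenvalue Gamma1 l gA lam /\ below_threshold Gamma1 l lam.
Proof.
  intros Hl.
  destruct (Rtotal_order (gA + sum4 (fun j => / l j)) 0) as [Hn|[Hz|Hp]].
  - destruct (gamma1_secular_root_neg l gA Hl Hn) as [k [Hk Hsec]].
    exists (- k ^ 2). split; [|left; nra].
    apply (gamma1_eigenvalue_of_sol l gA _ (fun x => sinh (k * x)) Hl (ode_sol_sinh k)).
    + now rewrite Rmult_0_r, sinh_0.
    + intros j Hj. apply Rgt_not_eq, sinh_pos, Rmult_lt_0_compat; auto.
    + unfold sum4, kcoth in *. rewrite !Derive_sinh_mul. exact Hsec.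
  - exists 0. split; [|left; lra].
    apply (gamma1_eigenvalue_of_sol l gA _ id Hl ode_sol_id); [reflexivity | |].
    + intros j Hj. apply Rgt_not_eq, Hl, Hj.
    + unfold sum4 in *. rewrite !Derive_id. unfold id, Rdiv. rewrite !Rmult_1_l. exact Hz.
  - destruct (gamma1_secular_root_pos l gA Hl Hp) as [k [Hk [Hb Hsec]]].
    exists (k ^ 2). split.
    + apply (gamma1_eigenvalue_of_sol l gA _ (fun x => sin (k * x)) Hl (ode_sol_sin k)).
      * now rewrite Rmult_0_r, sin_0.
      * intros j Hj. apply Rgt_not_eq, sin_gt_0; [apply Rmult_lt_0_compat|]; auto.
      * unfold sum4, kcot in *. rewrite !Derive_sin_mul. exact Hsec.
    + right. rewrite sqrt_pow2 by lra. split; [exact Hb | discriminate].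
Qed.

Lemma gamma2_eigenvalue_below_threshold (l : nat -> R) gA :
  0 < l 0%nat -> (forall j, In j [1;2;3;4]%nat -> 0 < l j) ->
  exists lam, is_eigenvalue Gamma2 l gA lam /\ below_threshold Gamma2 l lam.
Proof.
  intros H0 Hl.
  destruct (gamma2_secular_root l H0 Hl) as [k [Hk [Hb [Hb0 Hsec]]]].
  assert (Hc : 0 < cos (k * l 0%nat)) by (apply cos_gt_0; nra).
  exists (k ^ 2). split.
  - apply (gamma2_eigenvalue_of_sol l gA _ (fun x => sin (k * x)) (fun x => cos (k * (l 0%nat - x)))
             Hl (ode_sol_sin k)).
    + now rewrite Rmult_0_r, sin_0.
    + intros j Hj. apply Rgt_not_eq, sin_gt_0; [apply Rmult_lt_0_compat|]; auto.
    + apply ode_sol_cos_shift.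
    + now rewrite Derive_cos_shift, Rminus_diag, Rmult_0_r, sin_0, Rmult_0_r.
    + rewrite Rminus_0_r. lra.
    + unfold sum4, kcot, ktan in *. rewrite !Derive_sin_mul, Derive_cos_shift, !Rminus_0_r.
      exact Hsec.
  - right. rewrite sqrt_pow2 by lra. split; [exact Hb | intros _; exact Hb0].
Qed.

Lemma eigenvalue_below_threshold G l gA :
  (forall j, In j (edges G) -> 0 < l j) ->
  exists lam, is_eigenvalue G l gA lam /\ below_threshold G l lam.
Proof.
  intros Hl. assert (Hsp : forall j, In j [1;2;3;4]%nat -> 0 < l j)
    by (intros j Hj; now apply Hl, edges_spoke).
  destruct G.
  - now apply gamma1_eigenvalue_below_threshold.
  - apply gamma2_eigenvalue_below_threshold; [apply Hl; simpl; tauto | exact Hsp].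
Qed.

Lemma eigenfunction_profile G l gA lam :
  (forall j, In j (edges G) -> 0 < l j) -> below_threshold G l lam ->
  exists P : nat -> R -> R,
    (forall j x, In j (edges G) -> 0 <= x <= l j -> (j = 0%nat \/ 0 < x) -> 0 < P j x) /\
    (forall j k x, In j [1;2;3;4]%nat -> In k [1;2;3;4]%nat -> l j = l k -> P j x = P k x) /\
    (forall phi, is_eigenfunction G l gA lam phi ->
       forall j x, In j (edges G) -> 0 <= x <= l j -> phi j x = phi 1%nat (l 1%nat) * P j x).
Proof.
  intros Hl Hb.
  destruct (dirichlet_sol_pos lam) as [u [Hu [Hu0 Hupos]]].
  assert (Hu_spoke : forall j x, In j [1;2;3;4]%nat -> 0 < x <= l j -> 0 < u x).
  { intros j x Hj Hx. apply Hupos; [lra|].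
    destruct Hb as [Hb|[Hb _]]; [now left | right].
    apply Rle_lt_trans with (sqrt lam * l j); [|now apply Hb].
    apply Rmult_le_compat_l; [apply sqrt_pos | lra]. }
  assert (Hv : exists v, G = Gamma2 ->
             ode_sol lam v /\ Derive v (l 0%nat) = 0 /\ forall x, 0 <= x <= l 0%nat -> 0 < v x).
  { destruct G; [exists (fun _ => 1); discriminate|].
    destruct (neumann_sol_pos lam (l 0%nat)) as [v Hv].
    - apply Hl. simpl. tauto.
    - destruct Hb as [Hb|[_ Hb]]; [now left | right; now apply Hb].
    - now exists v. }
  destruct Hv as [v Hv].
  exists (fun j x => match j with O => v x / v 0 | _ => u x / u (l j) end).
  split; [|split].
  - intros j x Hj Hx Hjx. destruct (edges_cases G j Hj) as [Hs|[HG ->]].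
    + destruct j; [simpl in Hs; intuition discriminate|].
      destruct Hjx as [|Hx0]; [discriminate|].
      apply Rdiv_lt_0_compat; apply (Hu_spoke (S j)); auto; lra.
    + destruct (Hv HG) as [_ [_ Hvpos]]. apply Rdiv_lt_0_compat; apply Hvpos; lra.
  - intros j k x Hj Hk Ejk.
    destruct j; [simpl in Hj; intuition discriminate|].
    destruct k; [simpl in Hk; intuition discriminate|].
    now rewrite Ejk.
  - intros phi (He & HD & Hc & HA & _) j x Hj Hx.
    destruct (edges_cases G j Hj) as [Hs|[HG ->]].
    + rewrite <- (Hc j 1%nat Hs ltac:(simpl; tauto)).
      destruct j; [simpl in Hs; intuition discriminate|].
      apply (dirichlet_edge_profile lam (l (S j))); auto.
      intros t Ht. now apply (Hu_spoke (S j)).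
    + subst G. destruct HA as [HA0 [_ HC]]. destruct (Hv eq_refl) as [Hv1 [Hv2 Hv3]].
      rewrite <- HA0.
      apply (neumann_edge_profile lam (l 0%nat)); auto; lra.
Qed.

Theorem lemma4p3 (G : graph_kind) (l : nat -> R) (gA lam1 : R) :
  (forall j, In j (edges G) -> 0 < l j) ->
  is_first_eigenvalue G l gA lam1 ->
  is_simple_eigenvalue G l gA lam1 /\
  (l 1%nat = l 2%nat -> l 2%nat = l 3%nat -> l 3%nat = l 4%nat ->
   forall phi, is_eigenfunction G l gA lam1 phi ->
     (forall j k x, In j [1;2;3;4]%nat -> In k [1;2;3;4]%nat ->
        0 <= x <= l 1%nat -> phi j x = phi k x) /\
     (forall j x, In j (edges G) -> 0 <= x <= l j ->
        (j = 0%nat \/ 0 < x) -> phi j x <> 0)).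
Proof.
  intros Hl [_ Hmin].
  destruct (eigenvalue_below_threshold G l gA Hl) as [lam0 [Heig0 Hb0]].
  assert (Hb : below_threshold G l lam1) by (apply below_threshold_le with lam0; auto).
  destruct (eigenfunction_profile G l gA lam1 Hl Hb) as [P [HPpos [HPsym Hrep]]].
  assert (HA : forall phi, is_eigenfunction G l gA lam1 phi -> phi 1%nat (l 1%nat) <> 0).
  { intros phi Hphi HA0. pose proof Hphi as (_ & _ & _ & _ & j & x & Hj & Hx & Hne).
    apply Hne. rewrite (Hrep phi Hphi j x Hj Hx), HA0. ring. }
  split.
  - intros phi psi Hphi Hpsi. exists (psi 1%nat (l 1%nat) / phi 1%nat (l 1%nat)).
    intros j x Hj Hx. rewrite (Hrep phi Hphi j x Hj Hx), (Hrep psi Hpsi j x Hj Hx).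
    field. now apply HA.
  - intros E12 E23 E34 phi Hphi.
    assert (El : forall j, In j [1;2;3;4]%nat -> l j = l 1%nat) by (apply In_1234_ind; congruence).
    split.
    + intros j k x Hj Hk Hx.
      assert (Hxj : 0 <= x <= l j) by (rewrite El; auto).
      assert (Hxk : 0 <= x <= l k) by (rewrite El; auto).
      rewrite (Hrep phi Hphi j x (edges_spoke G j Hj) Hxj).
      rewrite (Hrep phi Hphi k x (edges_spoke G k Hk) Hxk).
      rewrite (HPsym j k x Hj Hk); [reflexivity|].
      now rewrite (El j Hj), (El k Hk).
    + intros j x Hj Hx Hjx. rewrite (Hrep phi Hphi j x Hj Hx).
      apply Rmult_integral_contrapositive_currified;
        [now apply HA | apply Rgt_not_eq, (HPpos j x Hj Hx Hjx)].
Qed.
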